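(* Let $\mathcal{H}$ be a hypothesis class of functions $h:\mathcal{X}\to\{0,1\}$ with VC-dimension $d$, and consider the source domain (index $0$) and test domain (index $T$). Fix $\delta\in(0,1)$, a sample size $m$, unlabeled samples $S_0$ from the source domain and $S_T$ from the test domain, each of size $m$, and a total number $N$ of labeled training samples. For a sample-ratio vector $\boldsymbol\lambda=(\lambda_0,1-\lambda_0)$ and weight vector $\boldsymbol\omega=(\omega_0,1-\omega_0)$, let \[ \epsilon_T(\boldsymbol\omega,\boldsymbol\lambda,N)=\omega_0\left(\hat d_{\mathcal{H}\Delta\mathcal{H}}(S_0,S_T)+4\sqrt{\frac{2d\log(2m)+\log\frac{2}{\delta}}{m}}+\varepsilon\right)+2\sqrt{\frac{\omega_0^2}{\lambda_0}+\frac{(1-\omega_0)^2}{1-\lambda_0}}\sqrt{\frac{d\log(2N)-\log\delta}{2N}}, \] with $\varepsilon=\min_{h\in\mathcal{H}}\{e_0(h)+e_T(h)\}$ and the convention that a term $0/0$ is taken to be $0$; this is the upper bound on $|e_T(\hat h)-e_T(h_T^* )|$ when $\hat h\in\mathcal{H}$ minimizes the empirical weighted error $\hat e_{\boldsymbol\omega}(h)$ on the training set and $h_T^*=\arg\min_{h\in\mathcal{H}}e_T(h)$. Let $\boldsymbol\omega'=\boldsymbol\lambda'=(1,0)$ (the fully test-time training scenario, in which no test-domain samples are labeled). Then for any $\boldsymbol\lambda\neq\boldsymbol\lambda'$ there exists a weight vector $\boldsymbol\omega$ such that \[ \epsilon_T(\boldsymbol\omega,\boldsymbol\lambda,N)<\epsilon_T(\boldsymbol\omega',\boldsymbol\lambda',N).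 \]
   Context: Binary classification setting with true labeling function $g:\mathcal{X}\to\{0,1\}$. The domain error of $h$ on the source (resp. test) domain with distribution $\mathcal{D}_0$ (resp. $\mathcal{D}_T$) is $e_0(h)=\mathbb{E}_{x\sim\mathcal{D}_0}|h(x)-g(x)|$ (resp. $e_T(h)=\mathbb{E}_{x\sim\mathcal{D}_T}|h(x)-g(x)|$). The training set consists of $N$ labeled samples, a fraction $\lambda_0$ from the source domain and $1-\lambda_0$ from the test domain (selected test nodes labeled), and the empirical weighted error is $\hat e_{\boldsymbol\omega}(h)=\frac{\omega_0}{N_0}\sum_{\text{source samples}}|h(x)-g(x)|+\frac{1-\omega_0}{N_1}\sum_{\text{test samples}}|h(x)-g(x)|$ with $N_0=\lambda_0N$, $N_1=(1-\lambda_0)N$. The $\mathcal{H}\Delta\mathcal{H}$-distance is $d_{\mathcal{H}\Delta\mathcal{H}}(\mathcal{D}_1,\mathcal{D}_2)=2\sup_{h,h'\in\mathcal{H}}|P_{x\sim\mathcal{D}_1}[h(x)\neq h'(x)]-P_{x\sim\mathcal{D}_2}[h(x)\neq h'(x)]|$, and $\hat d_{\mathcal{H}\Delta\mathcal{H}}(S_0,S_T)$ is its value on the empirical distributions of the samples. *)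

From HB Require Import structures.
From mathcomp Require Import all_boot all_order all_algebra.
From mathcomp Require Import all_classical all_reals all_analysis.
Set Implicit Arguments. Unset Strict Implicit. Unset Printing Implicit Defensive.
Import Order.TTheory GRing.Theory Num.Theory.
Local Open Scope classical_set_scope.
Local Open Scope ring_scope.

Section Defs.
Context {dsp : measure_display} {X : measurableType dsp} {R : realType}.

Definition shatters (H : set (X -> bool)) (A : seq X) : Prop :=
  forall B : seq X, {subset B <= A} ->
    exists2 h, H h & forall x, x \in A -> h x = (x \in B).

Definition VCdim (H : set (X -> bool)) (d : nat) : Prop :=
  (exists A : seq X, [/\ uniq A, size A = d & shatters H A]) /\
  (forall A : seq X, uniq A -> shatters H A -> (size A <= d)%N).

Definition err (P : probability X R) (g : X -> bool) (h : X -> bool) : R :=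
  fine (P [set x | h x != g x]).

Definition eps_joint (H : set (X -> bool)) (g : X -> bool)
  (P0 PT : probability X R) : R :=
  inf [set err P0 g h + err PT g h | h in H].

Definition emp_dis (S : seq X) (h h' : X -> bool) : R :=
  (count (fun x => h x != h' x) S)%:R / (size S)%:R.

Definition dHH_hat (H : set (X -> bool)) (S0 ST : seq X) : R :=
  2 * sup [set r | exists h h', [/\ H h, H h' &
             r = `|emp_dis S0 h h' - emp_dis ST h h'|] ].

(* The bound epsilon_T(omega, lambda, N); omega = (w0, 1-w0),
   lambda = (l0, 1-l0).  Divisions by 0 yield 0 in MathComp, matching the
   convention 0/0 = 0 on admissible pairs (see [admissible]). *)
Definition epsT (H : set (X -> bool)) (g : X -> bool) (P0 PT : probability X R)
  (d m : nat) (S0 ST : m.-tuple X) (delta : R) (N : nat) (w0 l0 : R) : R :=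
  w0 * (dHH_hat H S0 ST
        + 4 * Num.sqrt ((2 * d%:R * ln (2 * m%:R) + ln (2 / delta)) / m%:R)
        + eps_joint H g P0 PT)
  + 2 * Num.sqrt (w0 ^+ 2 / l0 + (1 - w0) ^+ 2 / (1 - l0))
      * Num.sqrt ((d%:R * ln (2 * N%:R) - ln delta) / (2 * N%:R)).

End Defs.

(* A weight w0 is admissible for ratio l0 when no term of the form a/0 with
   a <> 0 occurs (such a term would make the bound +infinity). *)
Definition admissible {R : realType} (w0 l0 : R) : Prop :=
  (l0 = 0 -> w0 = 0) /\ (l0 = 1 -> w0 = 1).

(* Take the weights equal to the sample ratios, w0 = l0.  Then
   w0^2/l0 + (1-w0)^2/(1-l0) = 1 (at l0 = 0 through 0/0 = 0), exactly as
   for the fully test-time pair (1, 1), so the two bounds share the same VC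
   term, while the source term dHH_hat + 4 sqrt(...) + eps_joint, which is
   strictly positive, gets the factor l0 < 1 instead of 1. *)
From HB Require Import structures.
From mathcomp Require Import all_boot all_order all_algebra.
From mathcomp Require Import all_classical all_reals all_analysis.
Import Order.TTheory GRing.Theory Num.Theory.
Local Open Scope classical_set_scope.
Local Open Scope ring_scope.

Lemma sup_ge0 (R : realType) (E : set R) :
  (forall x, E x -> 0 <= x) -> 0 <= sup E.
Proof.
move=> E_ge0; have [->|/set0P[x Ex]] := eqVneq E set0; first by rewrite sup0.
have [E_ub|E_nub] := pselect (has_ubound E).
  exact: le_trans (E_ge0 _ Ex) (ub_le_sup E_ub Ex).
by rewrite sup_out // => -[].
Qed.

Lemma inf_ge0 (R : realType) (E : set R) :
  (forall x, E x -> 0 <= x) -> 0 <= inf E.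
Proof.
move=> E_ge0; have [->|/set0P E_n0] := eqVneq E set0; first by rewrite inf0.
by apply: lb_le_inf => // x /E_ge0.
Qed.

Lemma sqrf_div_id (F : fieldType) (x : F) : x ^+ 2 / x = x.
Proof.
have [->|x_neq0] := eqVneq x 0; first by rewrite expr0n mul0r.
by rewrite expr2 mulfK.
Qed.

Lemma matched_weights_variance (F : fieldType) (l : F) :
  l ^+ 2 / l + (1 - l) ^+ 2 / (1 - l) = 1.
Proof. by rewrite !sqrf_div_id addrC subrK. Qed.

Lemma vc_deviation_gt0 (R : realType) (d m : nat) (delta : R) :
  0 < delta < 1 -> (0 < m)%N ->
  0 < Num.sqrt ((2 * d%:R * ln (2 * m%:R) + ln (2 / delta)) / m%:R).
Proof.
move=> /andP[delta_gt0 delta_lt1] m_gt0.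
rewrite sqrtr_gt0 divr_gt0 ?ltr0n //.
have ln_conf_gt0 : 0 < ln (2 / delta).
  by rewrite ln_gt0 // ltr_pdivlMr // mul1r (lt_trans delta_lt1) ?ltr1n.
have ln_2m_ge0 : 0 <= ln (2 * m%:R : R).
  by rewrite ln_ge0 // -[leLHS]mul1r ler_pM ?ler1n.
by rewrite ltr_wpDl // !mulr_ge0.
Qed.

Section Bound.
Context {dsp : measure_display} {X : measurableType dsp} {R : realType}.
Variables (H : set (X -> bool)) (g : X -> bool) (P0 PT : probability X R).

Lemma dHH_hat_ge0 (S0 ST : seq X) : 0 <= dHH_hat (R:=R) H S0 ST.
Proof.
rewrite mulr_ge0 //; apply: sup_ge0 => _ [h [h' [_ _ ->]]].
exact: normr_ge0.
Qed.

Lemma eps_joint_ge0 : 0 <= eps_joint H g P0 PT.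
Proof.
apply: inf_ge0 => _ [h _ <-].
by rewrite addr_ge0 // fine_ge0 // measure_ge0.
Qed.

Variables (d m : nat) (S0 ST : m.-tuple X) (delta : R) (N : nat).

Lemma epsT_matched (l : R) :
  epsT H g P0 PT d S0 ST delta N l l =
  l * (dHH_hat H S0 ST
       + 4 * Num.sqrt ((2 * d%:R * ln (2 * m%:R) + ln (2 / delta)) / m%:R)
       + eps_joint H g P0 PT)
  + 2 * Num.sqrt ((d%:R * ln (2 * N%:R) - ln delta) / (2 * N%:R)).
Proof. by rewrite /epsT (matched_weights_variance _ l) sqrtr1 mulr1. Qed.

Lemma source_term_gt0 : 0 < delta < 1 -> (0 < m)%N ->
  0 < dHH_hat H S0 ST
      + 4 * Num.sqrt ((2 * d%:R * ln (2 * m%:R) + ln (2 / delta)) / m%:R)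
      + eps_joint H g P0 PT.
Proof.
move=> delta01 m_gt0.
rewrite ltr_wpDr ?eps_joint_ge0 // ltr_wpDl ?dHH_hat_ge0 //.
by rewrite mulr_gt0 // vc_deviation_gt0.
Qed.

End Bound.

Theorem theorem2 (dsp : measure_display) (X : measurableType dsp) (R : realType)
  (H : set (X -> bool)) (d : nat) (g : X -> bool) (P0 PT : probability X R)
  (delta : R) (m : nat) (S0 ST : m.-tuple X) (N : nat) (l0 : R) :
  VCdim H d ->
  measurable_fun setT g -> (forall h, H h -> measurable_fun setT h) ->
  0 < delta < 1 -> (0 < m)%N -> (0 < N)%N ->
  0 <= l0 <= 1 -> l0 != 1 ->
  exists w0 : R, [/\ 0 <= w0 <= 1, admissible w0 l0 &
    epsT H g P0 PT d S0 ST delta N w0 l0 < epsT H g P0 PT d S0 ST delta N 1 1].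
Proof.
move=> _ _ _ delta01 m_gt0 _ l0_01 l0_neq1.
have l0_lt1 : l0 < 1 by rewrite lt_neqAle l0_neq1; case/andP: l0_01.
exists l0; split => //.
rewrite [ltLHS]epsT_matched [ltRHS]epsT_matched mul1r ltrD2r gtr_pMl //.
exact: source_term_gt0.
Qed.
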